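(* Let $\mathsf{K}$ be a quasivariety, $\mathbf{B}\in\mathsf{K}$, and $\mathbf{A}\leq\mathbf{B}$ proper and almost total. Then there exists $\theta\in\mathrm{Con}_{\mathsf{K}}(\mathbf{B})$ such that $\mathbf{A}/\theta\leq\mathbf{B}/\theta$ is full in $\mathsf{K}$.
   Context: A quasivariety is a class of similar algebras closed under isomorphic copies, subalgebras, direct products and ultraproducts. For $\mathbf{B}\in\mathsf{K}$, $\mathrm{Con}_{\mathsf{K}}(\mathbf{B})$ is the set of congruences $\theta$ of $\mathbf{B}$ with $\mathbf{B}/\theta\in\mathsf{K}$. For $\mathbf{A}\leq\mathbf{B}$, $\mathbf{A}/\theta$ denotes the subalgebra of $\mathbf{B}/\theta$ with universe $\{a/\theta : a\in A\}$. $\mathbf{A}\leq\mathbf{B}$ is almost total if $B=\mathrm{Sg}^{\mathbf{B}}(A\cup\{b\})$ for some $b\in B$. $\mathbf{A}\leq\mathbf{B}$ is full in $\mathsf{K}$ if it is proper, almost total, and for every $\theta\in\mathrm{Con}_{\mathsf{K}}(\mathbf{B})$ with $\theta\neq\mathrm{id}_B$ and every $b\in B$ there is $a\in A$ with $\langle a,b\rangle\in\theta$. *)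

From Stdlib Require Import ClassicalEpsilon.
From Stdlib Require Vectors.Fin.

Set Implicit Arguments.

Record signature := Signature { ops : Type; arity : ops -> nat }.

(** Algebras of a signature [S] (carrier possibly empty). *)
Record algebra (S : signature) := Algebra {
  car :> Type;
  op : forall o : ops S, (Fin.t (arity S o) -> car) -> car }.

Arguments op {S} a o args.

Section UA.
Variable S : signature.

Definition is_hom (A B : algebra S) (h : A -> B) : Prop :=
  forall o (args : Fin.t (arity S o) -> A),
    h (op A o args) = op B o (fun i => h (args i)).

Definition bijective_fun (X Y : Type) (h : X -> Y) : Prop :=
  (forall x y, h x = h y -> x = y) /\ (forall y, exists x, h x = y).

Definition subuniverse (B : algebra S) (A : B -> Prop) : Prop :=
  forall o (args : Fin.t (arity S o) -> B),
    (forall i, A (args i)) -> A (op B o args).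

Definition sub_alg (B : algebra S) (A : B -> Prop) (HA : subuniverse B A)
  : algebra S :=
  @Algebra S {x : B | A x}
    (fun o args => exist _ (op B o (fun i => proj1_sig (args i)))
                     (HA o _ (fun i => proj2_sig (args i)))).

Definition Sg (B : algebra S) (X : B -> Prop) : B -> Prop :=
  fun b => forall T : B -> Prop, subuniverse B T ->
             (forall x, X x -> T x) -> T b.

Definition prod_alg (I : Type) (F : I -> algebra S) : algebra S :=
  @Algebra S (forall i, F i)
    (fun o args => fun i => op (F i) o (fun k => args k i)).

Definition congruence (B : algebra S) (theta : B -> B -> Prop) : Prop :=
  (forall x, theta x x) /\
  (forall x y, theta x y -> theta y x) /\
  (forall x y z, theta x y -> theta y z -> theta x z) /\
  (forall o (a b : Fin.t (arity S o) -> B),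
      (forall i, theta (a i) (b i)) -> theta (op B o a) (op B o b)).

Definition qcar (B : algebra S) (theta : B -> B -> Prop) : Type :=
  {X : B -> Prop | exists b, X = theta b}.

Definition qclass (B : algebra S) (theta : B -> B -> Prop) (b : B)
  : qcar B theta :=
  exist _ (theta b) (ex_intro _ b eq_refl).

Definition qrep (B : algebra S) (theta : B -> B -> Prop) (X : qcar B theta) : B :=
  proj1_sig (constructive_indefinite_description _ (proj2_sig X)).

Definition quot_alg (B : algebra S) (theta : B -> B -> Prop) : algebra S :=
  @Algebra S (qcar B theta)
    (fun o args => @qclass B theta (op B o (fun i => @qrep B theta (args i)))).

(** A/theta as a subset of B/theta: { a/theta : a in A }. *)
Definition qsub (B : algebra S) (theta : B -> B -> Prop) (A : B -> Prop)
  : quot_alg B theta -> Prop :=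
  fun X => exists a, A a /\ proj1_sig X = theta a.

Definition ultrafilter (I : Type) (U : (I -> Prop) -> Prop) : Prop :=
  U (fun _ => True) /\
  ~ U (fun _ => False) /\
  (forall X Y : I -> Prop, U X -> (forall i, X i -> Y i) -> U Y) /\
  (forall X Y : I -> Prop, U X -> U Y -> U (fun i => X i /\ Y i)) /\
  (forall X : I -> Prop, U X \/ U (fun i => ~ X i)).

Definition ueq (I : Type) (F : I -> algebra S) (U : (I -> Prop) -> Prop)
  : prod_alg F -> prod_alg F -> Prop :=
  fun f g => U (fun i => f i = g i).

Definition ultraproduct (I : Type) (F : I -> algebra S) (U : (I -> Prop) -> Prop)
  : algebra S := quot_alg (prod_alg F) (@ueq I F U).

Definition quasivariety (K : algebra S -> Prop) : Prop :=
  (forall A B : algebra S, K A ->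
     (exists h : A -> B, is_hom A B h /\ bijective_fun h) -> K B) /\
  (forall (B : algebra S) (A : B -> Prop) (HA : subuniverse B A),
     K B -> (exists a, A a) -> K (sub_alg HA)) /\
  (forall (I : Type) (F : I -> algebra S),
     (forall i, K (F i)) -> K (prod_alg F)) /\
  (forall (I : Type) (F : I -> algebra S) (U : (I -> Prop) -> Prop),
     ultrafilter U -> (forall i, K (F i)) -> K (ultraproduct F U)).

Definition ConK (K : algebra S -> Prop) (B : algebra S)
  (theta : B -> B -> Prop) : Prop :=
  congruence B theta /\ K (quot_alg B theta).

Definition proper_sub (B : algebra S) (A : B -> Prop) : Prop :=
  subuniverse B A /\ exists b, ~ A b.

Definition almost_total (B : algebra S) (A : B -> Prop) : Prop :=
  exists b, forall c, Sg B (fun x => A x \/ x = b) c.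

Definition full (K : algebra S -> Prop) (B : algebra S) (A : B -> Prop) : Prop :=
  proper_sub B A /\ almost_total B A /\
  forall theta, ConK K B theta ->
    ~ (forall x y, theta x y <-> x = y) ->
    forall b, exists a, A a /\ theta a b.

End UA.

From Stdlib Require Import ClassicalEpsilon Classical FunctionalExtensionality
  PropExtensionality ProofIrrelevance.
From mathcomp Require classical_sets filter.

(* By Zorn's lemma there is a congruence theta in Con_K(B), maximal among those
   that do not glue the extra generator b to A.  Such a theta exists because
   Con_K(B) is closed under unions of chains: such a union is the kernel of the
   diagonal map of B into an ultraproduct of the quotients.  Every nontrivial
   K-congruence of B/theta pulls back to a strictly larger K-congruence of B,
   which must therefore glue b, hence (B being generated by A and b) every
   element, to A; this is fullness of A/theta in B/theta. *)

Set Implicit Arguments.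

Section Ultrafilters.
Variables (I : Type) (U : (I -> Prop) -> Prop).
Hypothesis U_ultra : ultrafilter U.

Lemma ultrafilter_mono {X Y : I -> Prop} : U X -> (forall i, X i -> Y i) -> U Y.
Proof. apply U_ultra. Qed.

Lemma ultrafilter_fin_inter n (P : Fin.t n -> I -> Prop) :
  (forall k, U (P k)) -> U (fun i => forall k, P k i).
Proof.
  destruct U_ultra as [UT [_ [US [UI _]]]].
  induction n as [|n IH]; intro HP.
  - apply (US _ _ UT); intros i _ k; inversion k.
  - pose proof (UI _ _ (HP Fin.F1) (IH (fun k => P (Fin.FS k)) (fun k => HP (Fin.FS k)))) as H.
    apply (US _ _ H); intros i [H1 H2] k; pattern k; apply Fin.caseS'; auto.
Qed.

End Ultrafilters.

Lemma ultrafilter_extension (I : Type) (G : (I -> Prop) -> Prop) :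
  G (fun _ => True) -> ~ G (fun _ => False) ->
  (forall X Y, G X -> G Y -> G (fun i => X i /\ Y i)) ->
  (forall X Y : I -> Prop, (forall i, X i -> Y i) -> G X -> G Y) ->
  exists U, ultrafilter U /\ forall X, G X -> U X.
Proof.
  intros GT GF GI GS.
  assert (G_proper : filter.ProperFilter G) by (constructor; [exact GF|constructor; auto]).
  destruct (filter.ultraFilterLemma G_proper) as [U [U_ultra GU]].
  pose proof (filter.ultra_proper (F := U)) as [UF [UT UI US]].
  exists U; split; [|exact GU].
  split; [exact UT|split; [exact UF|split; [|split]]].
  - intros X Y HX HXY; exact (US X Y HXY HX).
  - intros X Y; exact (UI X Y).
  - intro X; exact (filter.in_ultra_setVsetC X U_ultra).
Qed.

Section Quotient.
Variables (S : signature) (B : algebra S) (th : B -> B -> Prop).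
Hypothesis th_cong : congruence B th.

Lemma cong_refl x : th x x.
Proof. apply (proj1 th_cong). Qed.

Lemma cong_sym x y : th x y -> th y x.
Proof. apply (proj1 (proj2 th_cong)). Qed.

Lemma cong_trans x y z : th x y -> th y z -> th x z.
Proof. apply (proj1 (proj2 (proj2 th_cong))). Qed.

Lemma cong_op o (a c : Fin.t (arity S o) -> B) :
  (forall i, th (a i) (c i)) -> th (op B o a) (op B o c).
Proof. apply (proj2 (proj2 (proj2 th_cong))). Qed.

Lemma qcar_eq (X Y : qcar B th) : proj1_sig X = proj1_sig Y -> X = Y.
Proof. destruct X, Y; apply subset_eq_compat. Qed.

Lemma qclass_eq_iff x y : qclass B th x = qclass B th y <-> th x y.
Proof.
  split.
  - intro E; apply (f_equal (@proj1_sig _ _)) in E; simpl in E.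
    rewrite E; apply cong_refl.
  - intro H; apply qcar_eq; simpl.
    apply functional_extensionality; intro z; apply propositional_extensionality.
    split; intro H'; eauto using cong_sym, cong_trans.
Qed.

Lemma qclass_qrep (X : qcar B th) : qclass B th (qrep X) = X.
Proof.
  apply qcar_eq; unfold qrep; simpl.
  destruct (constructive_indefinite_description _ _) as [c Hc]; simpl; auto.
Qed.

Lemma qrep_qclass x : th (qrep (qclass B th x)) x.
Proof. apply qclass_eq_iff, qclass_qrep. Qed.

Lemma qclass_hom : is_hom B (quot_alg B th) (qclass B th).
Proof.
  intros o args; simpl; apply qclass_eq_iff, cong_op.
  intro i; apply cong_sym, qrep_qclass.
Qed.

End Quotient.

Section Homomorphisms.
Variable S : signature.

Lemma is_hom_comp (A B C : algebra S) (f : A -> B) (g : B -> C) :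
  is_hom A B f -> is_hom B C g -> is_hom A C (fun x => g (f x)).
Proof. intros Hf Hg o args; rewrite Hf, Hg; reflexivity. Qed.

Lemma is_hom_prod (B : algebra S) (I : Type) (F : I -> algebra S)
  (f : forall i, B -> F i) :
  (forall i, is_hom B (F i) (f i)) -> is_hom B (prod_alg F) (fun x i => f i x).
Proof.
  intros Hf o args; apply functional_extensionality_dep; intro i; apply Hf.
Qed.

Lemma Sg_ind (B : algebra S) (X P : B -> Prop) :
  subuniverse B P -> (forall x, X x -> P x) -> forall c, Sg B X c -> P c.
Proof. intros P_sub XP c Hc; exact (Hc P P_sub XP). Qed.

Lemma quasivariety_iso_inv (K : algebra S -> Prop) (A B : algebra S) (h : B -> A) :
  quasivariety K -> is_hom B A h -> bijective_fun h -> K A -> K B.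
Proof.
  intros HK h_hom [h_inj h_surj] KA.
  destruct (choice _ h_surj) as [g Hg].
  apply (proj1 HK A B KA); exists g; split; [|split].
  - intros o args; apply h_inj; rewrite Hg, h_hom; f_equal.
    apply functional_extensionality; intro i; symmetry; apply Hg.
  - intros x y E; rewrite <- (Hg x), <- (Hg y), E; reflexivity.
  - intro x; exists (h x); apply h_inj, Hg.
Qed.

Section Kernel.
Variables (B C : algebra S) (f : B -> C) (th : B -> B -> Prop).
Hypotheses (f_hom : is_hom B C f) (th_ker : forall x y, th x y <-> f x = f y).

Lemma kernel_congruence : congruence B th.
Proof.
  split; [|split; [|split]].
  - intro x; apply th_ker; reflexivity.
  - intros x y; rewrite !th_ker; intro E; symmetry; exact E.
  - intros x y z; rewrite !th_ker; intros E1 E2; transitivity (f y); assumption.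
  - intros o a c E; apply th_ker; rewrite !f_hom; f_equal.
    apply functional_extensionality; intro i; apply th_ker, E.
Qed.

Lemma image_subuniverse : subuniverse C (fun c => exists x, f x = c).
Proof.
  intros o args Hargs.
  destruct (choice _ Hargs) as [pre Hpre].
  exists (op B o pre); rewrite f_hom; f_equal.
  apply functional_extensionality; exact Hpre.
Qed.

(* Nonemptiness of B is needed: K is only closed under nonempty subalgebras. *)
Lemma kernel_ConK (K : algebra S -> Prop) :
  quasivariety K -> K C -> B -> ConK K B th.
Proof.
  intros HK KC b0.
  pose proof kernel_congruence as th_cong.
  assert (f_qrep : forall x, f (qrep (qclass B th x)) = f x)
    by (intro x; apply th_ker, qrep_qclass; exact th_cong).
  split; [exact th_cong|].
  pose (g := fun X : quot_alg B th =>
    exist (fun c => exists x, f x = c) (f (qrep X)) (ex_intro _ (qrep X) eq_refl)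
    : sub_alg image_subuniverse).
  apply (quasivariety_iso_inv (h := g) HK); [| split |].
  - intros o args; apply subset_eq_compat; simpl.
    rewrite f_qrep, f_hom; reflexivity.
  - intros X Y E; apply (f_equal (@proj1_sig _ _)) in E; simpl in E.
    rewrite <- (qclass_qrep X), <- (qclass_qrep Y).
    apply qclass_eq_iff, th_ker; assumption.
  - intros [c [x <-]]; exists (qclass B th x); apply subset_eq_compat; apply f_qrep.
  - apply (proj1 (proj2 HK)); [exact KC|exists (f b0), b0; reflexivity].
Qed.

End Kernel.

Lemma eq_ConK (K : algebra S -> Prop) (B : algebra S) :
  quasivariety K -> K B -> B -> ConK K B (@eq B).
Proof.
  intros HK KB b0; apply (kernel_ConK (f := fun x => x)); auto.
  - intros o args; reflexivity.
  - reflexivity.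
Qed.

End Homomorphisms.

Section Ultraproduct.
Variables (S : signature) (I : Type) (F : I -> algebra S) (U : (I -> Prop) -> Prop).
Hypothesis U_ultra : ultrafilter U.

Lemma ueq_congruence : congruence (prod_alg F) (@ueq S I F U).
Proof.
  unfold ueq; split; [|split; [|split]].
  - intro f; apply (ultrafilter_mono U_ultra (proj1 U_ultra)); auto.
  - intros f g H; apply (ultrafilter_mono U_ultra H); auto.
  - intros f g h H1 H2.
    apply (ultrafilter_mono U_ultra (proj1 (proj2 (proj2 (proj2 U_ultra))) _ _ H1 H2)).
    intros i [-> ->]; reflexivity.
  - intros o a c H.
    apply (ultrafilter_mono U_ultra (ultrafilter_fin_inter U_ultra _ H)).
    intros i Hi; simpl; f_equal; apply functional_extensionality; exact Hi.
Qed.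

End Ultraproduct.

Definition subrel (T : Type) (r r' : T -> T -> Prop) : Prop :=
  forall x y, r x y -> r' x y.

Definition rel_chain (I T : Type) (val : I -> T -> T -> Prop) : Prop :=
  forall i j, subrel (val i) (val j) \/ subrel (val j) (val i).

Definition union_rel (I T : Type) (val : I -> T -> T -> Prop) : T -> T -> Prop :=
  fun x y => exists i, val i x y.

Section ChainUnion.
Variables (S : signature) (K : algebra S -> Prop) (B : algebra S).
Variables (I : Type) (i0 : I) (val : I -> B -> B -> Prop).
Hypotheses (val_ConK : forall i, ConK K B (val i)) (val_chain : rel_chain val).

Let val_cong i : congruence B (val i) := proj1 (val_ConK i).

Lemma exists_ultrafilter_above :
  exists U, ultrafilter U /\ forall X, (exists i, forall j, subrel (val i) (val j) -> X j) -> U X.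
Proof.
  apply ultrafilter_extension.
  - exists i0; auto.
  - intros [i Hi]; exact (Hi i (fun x y H => H)).
  - intros X Y [i Hi] [j Hj]; destruct (val_chain i j) as [H|H].
    + exists j; intros k Hk; split; [apply Hi; intros x y Hxy|apply Hj]; auto.
    + exists i; intros k Hk; split; [apply Hi|apply Hj; intros x y Hxy]; auto.
  - intros X Y HXY [i Hi]; exists i; auto.
Qed.

Section Diagonal.
Variables (U : (I -> Prop) -> Prop).
Hypotheses (U_ultra : ultrafilter U)
  (U_above : forall X, (exists i, forall j, subrel (val i) (val j) -> X j) -> U X).

Let Q i := quot_alg B (val i).

Definition diag (x : B) : ultraproduct Q U :=
  qclass (prod_alg Q) (@ueq S I Q U) (fun i => qclass B (val i) x).

Lemma diag_hom : is_hom B (ultraproduct Q U) diag.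
Proof.
  apply (is_hom_comp (B := prod_alg Q)).
  - apply is_hom_prod; intro i; apply qclass_hom, val_cong.
  - apply qclass_hom, ueq_congruence, U_ultra.
Qed.

Lemma union_rel_diag x y : union_rel val x y <-> diag x = diag y.
Proof.
  unfold diag; split.
  - intros [i Hi]; apply (qclass_eq_iff (ueq_congruence Q U_ultra)).
    apply U_above; exists i; intros j Hij.
    apply qclass_eq_iff; auto.
  - intro H; apply (qclass_eq_iff (ueq_congruence Q U_ultra)) in H.
    apply NNPP; intro Hn; apply (proj1 (proj2 U_ultra)).
    apply (ultrafilter_mono U_ultra H); intros i Hi; apply Hn; exists i.
    apply (qclass_eq_iff (val_cong i)); exact Hi.
Qed.

End Diagonal.

Lemma union_rel_ConK : quasivariety K -> B -> ConK K B (union_rel val).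
Proof.
  intros HK b0.
  destruct exists_ultrafilter_above as [U [U_ultra U_above]].
  apply (kernel_ConK (union_rel val) (diag_hom U_ultra) (union_rel_diag U_ultra U_above) HK); [|exact b0].
  apply (proj2 (proj2 (proj2 HK))); [exact U_ultra|intro i; apply val_ConK].
Qed.

End ChainUnion.

Lemma relation_zorn (T : Type) (P : (T -> T -> Prop) -> Prop) (r0 : T -> T -> Prop) :
  P r0 ->
  (forall (I : Type) (i0 : I) (val : I -> T -> T -> Prop),
      (forall i, P (val i)) -> rel_chain val -> P (union_rel val)) ->
  exists r, P r /\ forall r', P r' -> subrel r r' -> subrel r' r.
Proof.
  intros Pr0 P_chain.
  pose (curry := fun X : classical_sets.set (T * T) => fun x y => X (x, y)).
  (* P is extended by the empty relation: it is the union of the empty chain. *)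
  destruct (@classical_sets.Zorn_bigcup (T * T)
      (fun X => X = classical_sets.set0 \/ P (curry X))) as [M [PM M_max]].
  - intros F HF F_tot.
    destruct (classic (exists X, F X /\ exists p, X p)) as [[X0 [FX0 [p0 Hp0]]]|Hempty].
    + right.
      assert (F_P : forall X, F X -> (exists p, X p) -> P (curry X)).
      { intros X FX [p Hp]; destruct (HF X FX) as [E|]; [rewrite E in Hp; destruct Hp|auto]. }
      pose (J := {X | F X /\ P (curry X)}).
      pose (val := fun j : J => curry (proj1_sig j)).
      replace (curry _) with (union_rel val).
      * apply (P_chain J (exist _ X0 (conj FX0 (F_P X0 FX0 (ex_intro _ p0 Hp0))))).
        -- intro j; exact (proj2 (proj2_sig j)).
        -- intros i j.
           destruct (F_tot _ _ (proj1 (proj2_sig i)) (proj1 (proj2_sig j))) as [H|H];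
             [left|right]; intros x y; apply H.
      * apply functional_extensionality; intro x; apply functional_extensionality; intro y.
        apply propositional_extensionality; split.
        -- intros [j Hj]; exists (proj1_sig j); [exact (proj1 (proj2_sig j))|exact Hj].
        -- intros [X FX HX]; exists (exist _ X (conj FX (F_P X FX (ex_intro _ _ HX)))); exact HX.
    + left; apply functional_extensionality; intro p; apply propositional_extensionality.
      split; [intros [X FX HX]; apply Hempty; eauto|intros []].
  - assert (M_max' : forall r, P r -> subrel (curry M) r -> subrel r (curry M)).
    { intros r Pr Mr x y Hxy; apply NNPP; intro Hn.
      apply (M_max (fun p => r (fst p) (snd p))); [split|right; exact Pr].
      - intros [u v]; apply Mr.
      - intro Hsub; exact (Hn (Hsub (x, y) Hxy)). }
    exists (curry M); split; [|exact M_max'].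
    destruct PM as [M0|]; [|assumption].
    assert (M_empty : forall x y, ~ curry M x y)
      by (intros x y; unfold curry; rewrite M0; intros []).
    replace (curry M) with r0; [exact Pr0|].
    apply functional_extensionality; intro x; apply functional_extensionality; intro y.
    apply propositional_extensionality; split.
    + apply M_max'; [exact Pr0|intros u v H; destruct (M_empty u v H)].
    + intro H; destruct (M_empty x y H).
Qed.

Section Pullback.
Variables (S : signature) (K : algebra S -> Prop) (B : algebra S) (th : B -> B -> Prop).
Hypothesis th_cong : congruence B th.
Variable th' : quot_alg B th -> quot_alg B th -> Prop.

Definition pullback : B -> B -> Prop :=
  fun x y => th' (qclass B th x) (qclass B th y).

Lemma pullback_ConK : quasivariety K -> ConK K (quot_alg B th) th' -> B -> ConK K B pullback.
Proof.
  intros HK [th'_cong K_th'] b0.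
  apply (kernel_ConK pullback
    (f := fun x => qclass _ th' (qclass B th x) : quot_alg (quot_alg B th) th')); auto.
  - apply is_hom_comp; apply qclass_hom; assumption.
  - intros x y; symmetry; apply qclass_eq_iff, th'_cong.
Qed.

Lemma subrel_pullback : congruence _ th' -> subrel th pullback.
Proof.
  intros th'_cong x y H; unfold pullback.
  rewrite (proj2 (qclass_eq_iff th_cong x y) H); apply cong_refl, th'_cong.
Qed.

Lemma pullback_subrel_eq : subrel pullback th -> forall Y Z, th' Y Z -> Y = Z.
Proof.
  intros pb_th Y Z HYZ; rewrite <- (qclass_qrep Y), <- (qclass_qrep Z).
  apply (qclass_eq_iff th_cong), pb_th; unfold pullback; rewrite !qclass_qrep; exact HYZ.
Qed.

End Pullback.

Section QuotientSub.
Variables (S : signature) (B : algebra S) (th : B -> B -> Prop) (A : B -> Prop).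
Hypotheses (th_cong : congruence B th) (A_sub : subuniverse B A).

Lemma qsub_qclass (X : quot_alg B th) :
  @qsub S B th A X <-> exists a, A a /\ X = qclass B th a.
Proof.
  split; intros [a [Ha E]]; exists a; split; auto.
  - apply qcar_eq; exact E.
  - rewrite E; reflexivity.
Qed.

Lemma qsub_subuniverse : subuniverse (quot_alg B th) (@qsub S B th A).
Proof.
  intros o args Hargs.
  destruct (choice _ (fun k => proj1 (qsub_qclass (args k)) (Hargs k))) as [pre Hpre].
  apply qsub_qclass; exists (op B o pre); split; [apply A_sub; apply Hpre|].
  rewrite (qclass_hom th_cong); f_equal.
  apply functional_extensionality; apply Hpre.
Qed.

Lemma almost_total_quot (b : B) :
  (forall c, Sg B (fun x => A x \/ x = b) c) ->
  forall X, Sg (quot_alg B th) (fun Y => @qsub S B th A Y \/ Y = qclass B th b) X.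
Proof.
  intros A_b_gen X T T_sub T_gen.
  rewrite <- (qclass_qrep X).
  refine (Sg_ind (P := fun c => T (qclass B th c)) _ _ (A_b_gen (qrep X))).
  - intros o args Hargs; rewrite (qclass_hom th_cong); apply T_sub; exact Hargs.
  - intros x [Hx| ->]; apply T_gen; [left; apply qsub_qclass; eauto|right; reflexivity].
Qed.

(* The classes meeting A form a subuniverse containing A and b. *)
Lemma glued_everywhere (b : B) :
  (forall c, Sg B (fun x => A x \/ x = b) c) ->
  (exists a, A a /\ th a b) -> forall c, exists a, A a /\ th a c.
Proof.
  intros A_b_gen Hab c.
  refine (Sg_ind (P := fun d => exists a, A a /\ th a d) _ _ (A_b_gen c)).
  - intros o args Hargs; destruct (choice _ Hargs) as [f Hf].
    exists (op B o f); split; [apply A_sub; apply Hf|apply cong_op; [exact th_cong|apply Hf]].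
  - intros x [Hx| ->]; [exists x; split; [exact Hx|apply cong_refl, th_cong]|exact Hab].
Qed.

End QuotientSub.

Section Main.
Variables (S : signature) (K : algebra S -> Prop) (B : algebra S) (A : B -> Prop) (b : B).
Hypotheses (HK : quasivariety K) (KB : K B) (A_sub : subuniverse B A)
  (A_b_gen : forall c, Sg B (fun x => A x \/ x = b) c) (b_notin_A : ~ A b).

Definition separating (th : B -> B -> Prop) : Prop :=
  ConK K B th /\ forall a, A a -> ~ th a b.

Lemma maximal_separating :
  exists th, separating th /\ forall th', separating th' -> subrel th th' -> subrel th' th.
Proof.
  apply (relation_zorn _ (@eq B)).
  - split; [exact (eq_ConK B HK KB b)|intros a Ha ->; exact (b_notin_A Ha)].
  - intros I i0 val val_sep val_chain; split.
    + apply (union_rel_ConK i0); [intro i; apply val_sep|exact val_chain|exact HK|exact b].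
    + intros a Ha [i Hi]; exact (proj2 (val_sep i) a Ha Hi).
Qed.

Lemma full_quot_maximal (th : B -> B -> Prop) :
  separating th -> (forall th', separating th' -> subrel th th' -> subrel th' th) ->
  full K (quot_alg B th) (@qsub S B th A).
Proof.
  intros [[th_cong K_th] th_sep] th_max.
  split; [split|split].
  - apply qsub_subuniverse; assumption.
  - exists (qclass B th b); intros [a [Ha E]]; apply (th_sep a Ha).
    simpl in E; rewrite <- E; apply cong_refl, th_cong.
  - exists (qclass B th b); apply almost_total_quot; assumption.
  - intros th' th'_ConK th'_nontrivial X.
    pose proof (pullback_ConK th_cong HK th'_ConK b) as pb_ConK.
    assert (pb_glues : exists a, A a /\ pullback th' a b).
    { apply NNPP; intro Hn.
      assert (pb_sep : separating (pullback th')) by (split; [exact pb_ConK|eauto]).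
      apply th'_nontrivial; intros Y Z; split; [|intros ->; apply cong_refl, th'_ConK].
      apply (pullback_subrel_eq th_cong), (th_max _ pb_sep), subrel_pullback;
        [exact th_cong|exact (proj1 th'_ConK)]. }
    destruct (glued_everywhere (proj1 pb_ConK) A_sub A_b_gen pb_glues (qrep X)) as [a [Ha HaX]].
    exists (qclass B th a); split; [apply qsub_qclass; eauto|].
    unfold pullback in HaX; rewrite qclass_qrep in HaX; exact HaX.
Qed.

End Main.

Theorem mainTheorem3 :
  forall (S : signature) (K : algebra S -> Prop),
    quasivariety K ->
    forall (B : algebra S), K B ->
    forall (A : B -> Prop),
      @proper_sub S B A -> @almost_total S B A ->
      exists theta : B -> B -> Prop,
        @ConK S K B theta /\
        @full S K (@quot_alg S B theta) (@qsub S B theta A).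
Proof.
  intros S K HK B KB A [A_sub [c Hc]] [b A_b_gen].
  assert (b_notin_A : ~ A b).
  { intro Hb; apply Hc, (Sg_ind A_sub) with (2 := A_b_gen c); intros x [Hx| ->]; assumption. }
  destruct (maximal_separating B A b HK KB b_notin_A) as [th [th_sep th_max]].
  exists th; split; [exact (proj1 th_sep)|].
  exact (full_quot_maximal HK A_sub A_b_gen th_sep th_max).
Qed.
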